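(* Consider $\dot x=f(x)+Bu+Cw$ with $x\in\mathbb{R}^n$, $u\in\mathbb{R}^p$, $w\in\mathbb{R}^r$, $f$ continuously differentiable, $B\in\mathbb{R}^{n\times p}$, $C\in\mathbb{R}^{n\times r}$, and suppose there are matrices $A_1,\dots,A_k\in\mathbb{R}^{n\times n}$ with $D_xf(x)\in\mathrm{conv}\{A_1,\dots,A_k\}$ for all $x\in\mathbb{R}^n$. Let $H\in\mathbb{R}^{m\times n}$ have full column rank, $\underline h\le\overline h\in\mathbb{R}^m$, $\mathcal P=\{x:\underline h\le Hx\le\overline h\}$, let $K=\{x:Hx\ge0_m\}$ with generating matrix $V\in\mathbb{R}^{n\times q}$ (i.e. $K=\{Vy:y\ge0_q\}$), and let $\underline\eta,\overline\eta\in\mathbb{R}^n$ satisfy $H\underline\eta=\underline h$, $H\overline\eta=\overline h$. Let $\underline w\le\overline w\in\mathbb{R}^r$. Suppose $(F^*,\alpha^* )\in\mathbb{R}^{p\times n}\times\mathbb{R}$ satisfies $H(A_i+BF^*+\alpha^*I_n)V\ge0_{m\times q}$ for all $i=1,\dots,k$, $H(f(\overline\eta)+BF^*\overline\eta)+(HC)^+\overline w+(HC)^-\underline w\le0_m$, $H(f(\underline\eta)+BF^*\underline\eta)+(HC)^+\underline w+(HC)^-\overline w\ge0_m$. Then $\mathcal P$ is forward invariant for the closed-loop system $\dot x=f(x)+BF^*x+Cw(t)$ for every disturbance signal $t\mapsto w(t)$ with $w(t)\in[\underline w,\overline w]$ for all $t\ge0$.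
   Context: For a matrix $M$, $M^+$ and $M^-$ denote its entrywise positive and negative parts: $(M^+)_{ij}=\max(M_{ij},0)$, $(M^-)_{ij}=\min(M_{ij},0)$. Vector/matrix inequalities are entrywise; $[\underline w,\overline w]=\{w:\underline w\le w\le\overline w\}$. $\mathrm{conv}$ denotes convex hull. A set $\mathcal P$ is forward invariant if every trajectory starting in $\mathcal P$ remains in $\mathcal P$ for all $t\ge0$. *)

From HB Require Import structures.
From mathcomp Require Import all_boot all_order all_algebra.
From mathcomp Require Import all_classical all_reals all_analysis.
Set Implicit Arguments. Unset Strict Implicit. Unset Printing Implicit Defensive.
Import Order.TTheory GRing.Theory Num.Theory.
Import numFieldNormedType.Exports.
Local Open Scope ring_scope.
Local Open Scope classical_set_scope.

Definition mxle (R : realType) m n (A B : 'M[R]_(m, n)) : Prop :=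
  forall i j, A i j <= B i j.

Definition mxpos (R : realType) m n (M : 'M[R]_(m, n)) : 'M[R]_(m, n) :=
  map_mx (fun a => Num.max a 0) M.
Definition mxneg (R : realType) m n (M : 'M[R]_(m, n)) : 'M[R]_(m, n) :=
  map_mx (fun a => Num.min a 0) M.

(* Jacobian matrix D_x f(x) of f : R^n -> R^n (column convention):
   (Dx f x) i j = d f_i / d x_j.  The library's [jacobian] uses row vectors
   (v *m jacobian f p = 'D_v f p), hence the transpositions. *)
Definition Dx (R : realType) n (f : 'cV[R]_n -> 'cV[R]_n) (x : 'cV[R]_n)
  : 'M[R]_n := (jacobian (fun v : 'rV[R]_n => (f v^T)^T) x^T)^T.

Definition in_conv (R : realType) n k (A : 'I_k -> 'M[R]_n) (M : 'M[R]_n) : Prop :=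
  exists lam : 'I_k -> R, (forall i, 0 <= lam i) /\ \sum_(i < k) lam i = 1 /\
    M = \sum_(i < k) lam i *: A i.

Definition C1 (R : realType) n (f : 'cV[R]_n -> 'cV[R]_n) : Prop :=
  (forall x, differentiable f x) /\ continuous (Dx f).

Definition in_polytope (R : realType) m n (H : 'M[R]_(m, n)) (hl hu : 'cV[R]_m) (x : 'cV[R]_n)
  : Prop := mxle hl (H *m x) /\ mxle (H *m x) hu.

Definition solution_on_Rplus (R : realType) n (g : R -> 'cV[R]_n -> 'cV[R]_n)
  (x : R -> 'cV[R]_n) : Prop :=
  {within [set t : R | 0 <= t], continuous x} /\
  forall t : R, 0 < t -> is_derive t 1 x (g t (x t)).

(* Put g(x) = f(x) + B F* x and K = {v : H v >= 0} = {V y : y >= 0}.  The mean value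
   theorem along segments and D f(x) in conv{A_i} make g quasi-monotone for K up to the
   shift alpha*: if x - y lies in K, then so does g x - g y + alpha* (x - y), because
   H (D f(xi) + B F* + alpha* I) V >= 0.  As g is also Lipschitz, this gives a comparison
   principle: if x' = g x + a(t), y' = g y + b(t), a(t) - b(t) in K and x(0) - y(0) in K,
   then x(t) - y(t) stays in K.  It is proved with Euler polygons: by real induction,
   x - y stays within eps e^((L+1)t) of the closed cone K, for every eps > 0.  The vertex
   conditions and the box bound on w(t) allow comparing the closed-loop trajectory with
   the constants eta_ and eta-bar, which solve x' = g x - g eta; this gives both sides
   of the polytope. *)
From HB Require Import structures.
From mathcomp Require Import all_boot all_order all_algebra.
From mathcomp Require Import all_classical all_reals all_analysis.
From mathcomp Require Import ring lra.
Set Implicit Arguments.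
Unset Strict Implicit.
Unset Printing Implicit Defensive.
Import Order.TTheory GRing.Theory Num.Theory.
Import numFieldNormedType.Exports.
Local Open Scope ring_scope.
Local Open Scope classical_set_scope.

Lemma linear_continuous_le {R : realType} {V W : normedModType R}
    (f : {linear V -> W}) (c : R) :
  (forall x, `|f x| <= c * `|x|) -> continuous f.
Proof.
move=> fc; apply/bounded_linear_continuous/linear_boundedP.
near=> r => x; apply: le_trans (fc x) (ler_wpM2r (normr_ge0 x) _).
by near: r; apply: nbhs_pinfty_ge; rewrite num_real.
Unshelve. all: by end_near. Qed.

Section MatrixNorm.
Context {R : realType}.

Lemma mx_norm_entry m n (M : 'M[R]_(m, n)) i j : `|M i j| <= `|M|.
Proof.
rewrite [`|M|]mx_normrE.
exact: (le_bigmax _ (fun ij : 'I_m * 'I_n => `|M ij.1 ij.2|) (i, j)).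
Qed.

Lemma mx_norm_le m n (M : 'M[R]_(m, n)) (c : R) :
  0 <= c -> (forall i j, `|M i j| <= c) -> `|M| <= c.
Proof. by move=> c0 Mc; rewrite [`|M|]mx_normrE; apply: bigmax_le => // -[i j]. Qed.

Definition mxabs_sum {m n} (M : 'M[R]_(m, n)) : R := \sum_i \sum_j `|M i j|.

Lemma mxabs_sum_ge0 m n (M : 'M[R]_(m, n)) : 0 <= mxabs_sum M.
Proof. by apply: sumr_ge0 => i _; apply: sumr_ge0. Qed.

Lemma mulmx_norm_le m n p (M : 'M[R]_(m, n)) (N : 'M[R]_(n, p)) :
  `|M *m N| <= mxabs_sum M * `|N|.
Proof.
apply: mx_norm_le => [|i j]; first by rewrite mulr_ge0 ?mxabs_sum_ge0.
rewrite mxE; apply: le_trans (ler_norm_sum _ _ _) _.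
apply: (@le_trans _ _ (\sum_l `|M i l| * `|N|)).
  by apply: ler_sum => l _; rewrite normrM ler_wpM2l ?mx_norm_entry.
rewrite -mulr_suml ler_wpM2r // /mxabs_sum (bigD1 i) //= lerDl.
by apply: sumr_ge0 => k _; apply: sumr_ge0.
Qed.

Lemma mxabs_sum_conv_le n k (A : 'I_k -> 'M[R]_n) (M : 'M[R]_n) :
  in_conv A M -> mxabs_sum M <= \sum_l mxabs_sum (A l).
Proof.
move=> [lam [lam0 [lam1 ->]]].
rewrite /mxabs_sum [leRHS]exchange_big; apply: ler_sum => i _.
rewrite [leRHS]exchange_big; apply: ler_sum => j _.
rewrite summxE; apply: le_trans (ler_norm_sum _ _ _) _; apply: ler_sum => l _.
rewrite mxE normrM ger0_norm // ler_piMl // -lam1 (bigD1 l) //= lerDl.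
exact: sumr_ge0.
Qed.

Lemma trmx_continuous m n : continuous (@trmx R m n).
Proof.
apply: (@linear_continuous_le _ _ _ _ 1) => M; rewrite mul1r.
by apply: mx_norm_le => // i j; rewrite mxE mx_norm_entry.
Qed.

Definition rowform {n} (c : 'rV[R]_n) (u : 'cV[R]_n) : R^o := (c *m u) 0 0.

Lemma rowform_is_linear n (c : 'rV[R]_n) : linear (rowform c).
Proof. by move=> a u v; rewrite /rowform mulmxDr -scalemxAr !mxE. Qed.

HB.instance Definition _ n (c : 'rV[R]_n) :=
  GRing.isLinear.Build R 'cV[R]_n R^o *:%R (rowform c) (rowform_is_linear c).

Lemma rowform_continuous n (c : 'rV[R]_n) : continuous (rowform c).
Proof.
apply: (@linear_continuous_le _ _ _ _ (mxabs_sum c)) => u.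
exact: le_trans (mx_norm_entry (c *m u) 0 0) (mulmx_norm_le c u).
Qed.

Lemma rowform_row m n (H : 'M[R]_(m, n)) i (v : 'cV[R]_n) :
  rowform (row i H) v = (H *m v) i 0.
Proof. by rewrite /rowform -row_mul mxE. Qed.

End MatrixNorm.

Section MatrixCone.
Context {R : realType}.

Lemma mxle0P m n (M : 'M[R]_(m, n)) : mxle 0 M <-> forall i j, 0 <= M i j.
Proof. by split=> M0 i j; have := M0 i j; rewrite mxE. Qed.

Lemma mulmx_ge0 m n p (P : 'M[R]_(m, n)) (Q : 'M[R]_(n, p)) :
  mxle 0 P -> mxle 0 Q -> mxle 0 (P *m Q).
Proof.
move=> /mxle0P P0 /mxle0P Q0; apply/mxle0P => i j; rewrite mxE.
by apply: sumr_ge0 => l _; apply: mulr_ge0.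
Qed.

Lemma conv_comb_ge0 m n k (lam : 'I_k -> R) (P : 'I_k -> 'M[R]_(m, n)) :
  (forall l, 0 <= lam l) -> (forall l, mxle 0 (P l)) -> mxle 0 (\sum_l lam l *: P l).
Proof.
move=> lam0 P0; apply/mxle0P => i j; rewrite summxE; apply: sumr_ge0 => l _.
by rewrite mxE; apply: mulr_ge0 => //; have /mxle0P := P0 l; apply.
Qed.

Definition mx_cone {m n} (H : 'M[R]_(m, n)) : set 'cV[R]_n :=
  [set v | mxle 0 (H *m v)].

Lemma mx_cone_closed m n (H : 'M[R]_(m, n)) : closed (mx_cone H).
Proof.
have -> : mx_cone H =
    \bigcap_(i in [set: 'I_m]) (rowform (row i H) @^-1` [set x | 0 <= x]).
  apply/seteqP; split=> v Hv i => [_ | j] /=.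
    by rewrite rowform_row; have := Hv i 0; rewrite mxE.
  by rewrite (ord1 j) mxE -rowform_row; exact: Hv.
apply: closed_bigI => i _; apply: preimage_closed; last exact: closed_ge.
by move=> u _; exact: rowform_continuous.
Qed.

Lemma mx_coneD m n (H : 'M[R]_(m, n)) u v :
  mx_cone H u -> mx_cone H v -> mx_cone H (u + v).
Proof.
by move=> Hu Hv i j; have := Hu i j; have := Hv i j; rewrite mulmxDr !mxE; lra.
Qed.

Lemma mx_coneZ m n (H : 'M[R]_(m, n)) (a : R) v :
  0 <= a -> mx_cone H v -> mx_cone H (a *: v).
Proof.
by move=> a0 Hv i j; have := Hv i j; rewrite -scalemxAr !mxE; apply: mulr_ge0.
Qed.

Lemma mx_cone_subP m n (H : 'M[R]_(m, n)) (u v : 'cV[R]_n) :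
  mx_cone H (u - v) <-> mxle (H *m v) (H *m u).
Proof. by split=> uv i j; have := uv i j; rewrite mulmxBr !mxE; lra. Qed.

End MatrixCone.

Section MeanValue.
Context {R : realType}.

Lemma is_derive_along_line {V W : normedModType R} (f : V -> W) (v y : V) (s : R) :
  differentiable f (s *: v + y) ->
  is_derive s 1 (fun t : R => f (t *: v + y)) ('d f (s *: v + y) v).
Proof.
move=> df.
have dline : is_diff s ( *:%R^~ v + cst y) ( *:%R^~ v + 0) by exact: is_diffD.
have dfl := is_diff_comp dline (differentiableP df).
apply: DeriveDef; first exact: diff_derivable.
by rewrite deriveE // diff_val /= addr0 scale1r.
Qed.

Lemma is_derive_linear {V W : normedModType R} (l : {linear V -> W}) (F : R -> V)
    (s : R) (D : V) :
  continuous l -> is_derive s 1 F D -> is_derive s 1 (l \o F) (l D).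
Proof.
move=> lc [dF <-]; have dFs : differentiable F s by apply/derivable1_diffP.
have dl : is_diff (F s) l l by split; [exact: linear_differentiable | exact: diff_lin].
have dlF := is_diff_comp (differentiableP dFs) dl.
apply: DeriveDef; first exact: diff_derivable.
by rewrite deriveE // diff_val /= -deriveE.
Qed.

Lemma linear_mvt {V W : normedModType R} (f : V -> W) (l : {linear W -> R^o}) (x y : V) :
  (forall z, differentiable f z) -> continuous l ->
  exists z, l (f x - f y) = l ('d f z (x - y)).
Proof.
move=> df lc; pose psi t := l (f (t *: (x - y) + y)).
have psi' (t : R) : is_derive t 1 psi (l ('d f (t *: (x - y) + y) (x - y))).
  by have := is_derive_linear lc (is_derive_along_line (df (t *: (x - y) + y))).
have psic : {within `[0, 1], continuous psi}.
  by apply: derivable_within_continuous => t _; have [] := psi' t.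
have [t _] := MVT ltr01 (fun t _ => psi' t) psic.
rewrite /psi subr0 mulr1 scale1r scale0r add0r subrK -linearB => ->.
by exists (t *: (x - y) + y).
Qed.

Lemma Dx_mulmx n (f : 'cV[R]_n -> 'cV[R]_n) (z v : 'cV[R]_n) :
  differentiable f z -> Dx f z *m v = 'd f z v.
Proof.
move=> df; pose G := (@trmx R n 1) \o f \o (@trmx R 1 n).
have dtr a b (M : 'M[R]_(a, b)) : is_diff M (@trmx R a b) (@trmx R a b).
  by split; [apply: linear_differentiable | apply: diff_lin];
     exact: trmx_continuous.
have dfT : is_diff (z^T) (f \o @trmx R 1 n) ('d f z \o @trmx R 1 n).
  by apply: is_diff_comp; rewrite /= trmxK; exact: differentiableP.
have dG : is_diff (z^T) G (@trmx R n 1 \o 'd f z \o @trmx R 1 n).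
  exact: is_diff_comp dfT (dtr _ _ _).
rewrite /Dx -[v]trmxK -trmx_mul -/G -deriveEjacobian //.
by rewrite deriveE // diff_val /= !trmxK.
Qed.

Lemma mvt_rowform n (f : 'cV[R]_n -> 'cV[R]_n) (c : 'rV[R]_n) (x y : 'cV[R]_n) :
  (forall z, differentiable f z) ->
  exists z, rowform c (f x - f y) = rowform c (Dx f z *m (x - y)).
Proof.
move=> df; have [z ->] := linear_mvt x y df (@rowform_continuous _ _ c).
by exists z; rewrite Dx_mulmx.
Qed.

End MeanValue.

Lemma real_induction {R : realType} (P : R -> Prop) :
  (forall t, 0 <= t -> (forall s, 0 <= s -> s < t -> P s) -> P t) ->
  (forall t, 0 <= t -> P t -> exists2 h, 0 < h & forall s, t < s < t + h -> P s) ->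
  forall t, 0 <= t -> P t.
Proof.
(* [S] is the supremum of the [s <= T] before which [P] holds: [Pleft] gives [P S], and
   [Pright] would push that supremum beyond [S] unless [S = T]. *)
move=> Pleft Pright T T0.
pose A := [set s : R | 0 <= s <= T /\ forall u, 0 <= u -> u < s -> P u].
have A0 : A 0 by split=> [|u u0 u0']; [rewrite lexx T0 | lra].
have supA : has_sup A by split; [exists 0 | exists T => s [/andP[]]].
set S := sup A.
have S0 : 0 <= S := sup_upper_bound supA A0.
have ST : S <= T by apply: ge_sup => [|s [/andP[]]]; first by exists 0.
have belowS u : 0 <= u -> u < S -> P u.
  by move=> u0 /(sup_gt (ex_intro _ 0 A0)) [s [_ Ps] us]; exact: Ps.
have PS : P S := Pleft S S0 belowS.
have [ST'|TS] := ltrP S T; last by have -> : T = S by apply/eqP; rewrite eq_le TS.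
have [h h0 Ph] := Pright S S0 PS.
pose s := S + Num.min h (T - S) / 2.
have /andP[mh mT] : (Num.min h (T - S) <= h) && (Num.min h (T - S) <= T - S).
  by rewrite -le_min.
have m0 : 0 < Num.min h (T - S) by rewrite lt_min h0 subr_gt0.
have As : A s.
  split=> [|u u0 us]; first by apply/andP; split; rewrite /s; lra.
  have [uS|Su] := ltrP u S; first exact: belowS.
  move: Su; rewrite le_eqVlt => /orP[/eqP <- //|Su].
  by apply: Ph; apply/andP; split; rewrite /s in us; lra.
have sS : s <= S := sup_upper_bound supA As.
by rewrite /s in sS; lra.
Qed.

Lemma is_derive_remainder_le {R : realType} {V : normedModType R}
    (d : R -> V) (t : R) (D : V) :
  is_derive t 1 d D -> forall e, 0 < e ->
  exists2 h, 0 < h & forall s, 0 < s < h -> `|d (t + s) - d t - s *: D| <= e * s.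
Proof.
move=> [dd <-] e e0.
have /cvgrPdist_le /(_ e e0) /nbhs_ballP [h h0 dh] := dd.
exists h => // s /andP[s0 sh].
have := dh s; rewrite /ball /= sub0r normrN gtr0_norm // => /(_ sh).
rewrite gt_eqF // => /(_ isT); rewrite [s%:A]mulr1 [s + t]addrC => ds.
have -> : d (t + s) - d t - s *: 'D_1 d t = s *: (s^-1 *: (d (t + s) - d t) - 'D_1 d t).
  by rewrite scalerBr scalerA mulfV ?gt_eqF // scale1r.
by rewrite normrZ gtr0_norm // distrC mulrC ler_pM2r.
Qed.

Section ConeInvariance.
Context {R : realType} {V : normedModType R} (K : set V).
Hypothesis K_add : forall u v, K u -> K v -> K (u + v).
Hypothesis K_scale : forall (a : R) v, 0 <= a -> K v -> K (a *: v).
Hypothesis K_closed : closed K.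

Definition near_cone (r : R) (v : V) :=
  forall eta, 0 < eta -> exists2 k, K k & `|v - k| <= r + eta.

Lemma near_cone_mem v : (forall r, 0 < r -> near_cone r v) -> K v.
Proof.
move=> Kv; apply: K_closed => N /nbhs_ballP [e e0 eN].
have e3 : 0 < e / 3 by rewrite divr_gt0.
have [k Kk vk] := Kv _ e3 _ e3; exists k; split=> //; apply: eN.
by rewrite -ball_normE /=; lra.
Qed.

Variables (d : R -> V) (phi : R -> V -> V) (L alpha : R).
Hypothesis L_ge0 : 0 <= L.
Hypothesis d_cont0 : d @ 0^'+ --> d 0.
Hypothesis d_deriv : forall t : R, 0 < t -> is_derive t 1 d (phi t (d t)).
Hypothesis phi_lip : forall (t : R) u v, 0 < t -> `|phi t u - phi t v| <= L * `|u - v|.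
Hypothesis phi_cone : forall (t : R) v, 0 < t -> K v -> K (phi t v + alpha *: v).
Hypothesis d0_cone : K (d 0).

Lemma cone_euler_step (t s : R) k :
  0 < t -> K k -> 0 <= s -> alpha * s <= 1 -> K (k + s *: phi t k).
Proof.
move=> t0 Kk s0 as1.
have -> : k + s *: phi t k = (1 - alpha * s) *: k + s *: (phi t k + alpha *: k).
  by rewrite scalerDr scalerA scalerBl scale1r [s * alpha]mulrC addrCA subrK addrC.
by apply: K_add; apply: K_scale => //; [lra | exact: phi_cone].
Qed.

(* [tube eps t]: at time [t] the curve is within [eps * exp (M t)] of [K]; over an
   Euler step of length [s] the Lipschitz error grows this radius by a factor
   [1 + (L + 1) s <= exp (M s)]. *)
Let M := L + 1.
Let tube (eps t : R) := near_cone (eps * expR (M * t)) (d t).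

Lemma tube_left_closed (eps t : R) : 0 < eps -> 0 <= t ->
  (forall s, 0 <= s -> s < t -> tube eps s) -> tube eps t.
Proof.
move=> eps0 t0 tube_before eta eta0.
have [->|tn0] := eqVneq t 0.
  by exists (d 0) => //; rewrite subrr normr0 mulr0 expR0 mulr1; lra.
have tp : 0 < t by rewrite lt_neqAle eq_sym tn0 t0.
have eta2 : 0 < eta / 2 by rewrite divr_gt0.
have : {for t, continuous d}.
  by apply/differentiable_continuous/derivable1_diffP; have [] := d_deriv tp.
move=> /cvgrPdist_lt /(_ _ eta2) /nbhs_ballP [del del0 near_t].
have /andP[qd qt] : (Num.min del t <= del) && (Num.min del t <= t) by rewrite -le_min.
have q0 : 0 < Num.min del t by rewrite lt_min del0 tp.
pose s := t - Num.min del t / 2.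
have s0 : 0 <= s by rewrite /s; lra.
have st : s < t by rewrite /s; lra.
have [k Kk dsk] := tube_before s s0 st _ eta2.
exists k => //.
have dts : `|d t - d s| < eta / 2.
  by apply: near_t; rewrite /ball /= /s opprB addrC subrK gtr0_norm; lra.
have : eps * expR (M * s) <= eps * expR (M * t).
  apply: ler_wpM2l; [exact: ltW | rewrite ler_expR].
  by apply: ler_wpM2l; [rewrite /M addr_ge0 | exact: ltW].
have := ler_distD (d s) (d t) k.
lra.
Qed.

Lemma tube_right_start (eps : R) : 0 < eps ->
  exists2 h, 0 < h & forall s, 0 < s < h -> tube eps s.
Proof.
(* [lra] ignores section hypotheses, hence the local copy of [L_ge0]. *)
move=> eps0; have L0 := L_ge0.
have /cvgrPdist_lt /(_ _ eps0) /nbhs_ballP [h h0 near0] := d_cont0.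
exists h => // s /andP[s0 sh] eta eta0; exists (d 0) => //.
have : `|d 0 - d s| < eps.
  by apply: near0 => //; rewrite /ball /= sub0r normrN gtr0_norm.
have : 1 <= expR (M * s).
  by apply: le_trans (expR_ge1Dx _); rewrite lerDl mulr_ge0 /M; lra.
rewrite distrC; nra.
Qed.

Lemma tube_right_step (eps t : R) : 0 < eps -> 0 < t -> tube eps t ->
  exists2 h, 0 < h & forall u, t < u < t + h -> tube eps u.
Proof.
move=> eps0 tp tube_t; have L0 := L_ge0.
set r := eps * expR (M * t).
have r0 : 0 < r by rewrite mulr_gt0 ?expR_gt0.
have [h1 h10 remainder] := is_derive_remainder_le (d_deriv tp) r0.
have a1 : 0 < `|alpha| + 1 by rewrite ltr_wpDl.
pose h := Num.min h1 (Num.min 1 (`|alpha| + 1)^-1).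
have /and3P[hh1 hle1 hlea] : [&& h <= h1, h <= 1 & h <= (`|alpha| + 1)^-1].
  by rewrite -!le_min.
exists h; first by rewrite !lt_min h10 ltr01 invr_gt0.
move=> u /andP[tu uth] eta eta0.
pose s := u - t; have -> : u = t + s by rewrite /s addrC subrK.
have s0 : 0 < s by rewrite /s; lra.
have sh : s < h by rewrite /s; lra.
pose eta' := eta / (1 + L).
have eta'0 : 0 < eta' by rewrite divr_gt0 //; lra.
have [k Kk] := tube_t eta' eta'0; rewrite -/r => dk.
have alpha_s : alpha * s <= 1.
  have : `|alpha| / (`|alpha| + 1) < 1 by rewrite ltr_pdivrMr //; lra.
  have : `|alpha| * s <= `|alpha| / (`|alpha| + 1) by rewrite ler_wpM2l //; lra.
  have : alpha * s <= `|alpha| * s by rewrite ler_wpM2r ?ler_norm //; lra.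
  lra.
exists (k + s *: phi t k); first exact: cone_euler_step (ltW s0) alpha_s.
have n1 : `|d (t + s) - (d t + s *: phi t (d t))| <= r * s.
  by rewrite opprD addrA; apply: remainder; apply/andP; split; lra.
have n2 : `|d t + s *: phi t (d t) - (k + s *: phi t k)|
    <= `|d t - k| + s * (L * `|d t - k|).
  rewrite opprD addrACA -scalerBr; apply: le_trans (ler_normD _ _) _.
  rewrite normrZ gtr0_norm // lerD2l.
  by apply: ler_wpM2l; [exact: ltW | exact: phi_lip].
have growth : r * (1 + s + s * L) <= eps * expR (M * (t + s)).
  rewrite [M * (t + s)]mulrDr expRD mulrA -/r; apply: ler_wpM2l; first exact: ltW.
  by apply: le_trans (expR_ge1Dx _); rewrite /M; lra.
have sLk : s * (L * `|d t - k|) <= s * (L * (r + eta')).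
  by apply: ler_wpM2l; [exact: ltW | exact: ler_wpM2l].
have sL : s * L * eta' <= L * eta' by have := mulr_ge0 L0 (ltW eta'0); nra.
have eta'E : eta' * (1 + L) = eta by rewrite /eta' divfK // gt_eqF //; lra.
apply: le_trans (ler_distD (d t + s *: phi t (d t)) _ _) _.
lra.
Qed.

Theorem cone_invariant (t : R) : 0 <= t -> K (d t).
Proof.
have tube_all eps : 0 < eps -> forall s, 0 <= s -> tube eps s.
  move=> eps0; apply: real_induction => [s s0|s s0 tube_s].
    exact: tube_left_closed.
  have [->|sn0] := eqVneq s 0.
    have [h h0 near0] := tube_right_start eps0.
    by exists h => // u; rewrite add0r; exact: near0.
  by apply: tube_right_step => //; rewrite lt_neqAle eq_sym sn0.
move=> t0; apply: near_cone_mem => r r0.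
have E0 : 0 < expR (M * t) := expR_gt0 _.
have := tube_all (r / expR (M * t)) (divr_gt0 r0 E0) t t0.
by rewrite /tube divfK // gt_eqF.
Qed.

End ConeInvariance.


Section ClosedLoop.
Context {R : realType}.

Lemma conv_jacobian_lipschitz n k (f : 'cV[R]_n -> 'cV[R]_n) (A : 'I_k -> 'M[R]_n) :
  (forall z, differentiable f z) -> (forall z, in_conv A (Dx f z)) ->
  forall x y, `|f x - f y| <= (\sum_l mxabs_sum (A l)) * `|x - y|.
Proof.
move=> df Aconv x y; apply: mx_norm_le => [|i j].
  by rewrite mulr_ge0 // sumr_ge0 // => l _; exact: mxabs_sum_ge0.
have [z] := mvt_rowform (row i 1%:M) x y df; rewrite (ord1 j) !rowform_row !mul1mx => ->.
apply: le_trans (mx_norm_entry _ i 0) _; apply: le_trans (mulmx_norm_le _ _) _.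
by rewrite ler_wpM2r // mxabs_sum_conv_le.
Qed.

Lemma lipschitz_add_mulmx n (f : 'cV[R]_n -> 'cV[R]_n) (P : 'M[R]_n) (c : R) :
  (forall u v, `|f u - f v| <= c * `|u - v|) ->
  forall u v, `|(f u + P *m u) - (f v + P *m v)| <= (c + mxabs_sum P) * `|u - v|.
Proof.
move=> flip u v; rewrite opprD addrACA -mulmxBr mulrDl.
by apply: le_trans (ler_normD _ _) _; apply: lerD => //; exact: mulmx_norm_le.
Qed.

Lemma conv_jacobian_quasimonotone m n q k (f : 'cV[R]_n -> 'cV[R]_n)
    (A : 'I_k -> 'M[R]_n) (P : 'M[R]_n) (H : 'M[R]_(m, n)) (V : 'M[R]_(n, q))
    (alpha : R) :
  (forall z, differentiable f z) -> (forall z, in_conv A (Dx f z)) ->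
  (forall x, mx_cone H x <-> exists y : 'cV[R]_q, mxle 0 y /\ x = V *m y) ->
  (forall l, mxle 0 (H *m (A l + P + alpha%:M) *m V)) ->
  forall x y, mx_cone H (x - y) ->
    mx_cone H ((f x + P *m x) - (f y + P *m y) + alpha *: (x - y)).
Proof.
move=> df Aconv cone HAV x y /cone [z [z0 xyE]]; apply/mxle0P => j j'.
rewrite (ord1 j'); have [xi fxy] := mvt_rowform (row j H) x y df.
have [lam [lam0 [lam1 DxE]]] := Aconv xi.
have -> : f x + P *m x - (f y + P *m y) + alpha *: (x - y) =
    (f x - f y) + (P + alpha%:M) *m (x - y).
  by rewrite mulmxDl mul_scalar_mx mulmxBr opprD addrACA !addrA.
rewrite -rowform_row linearD /= fxy -linearD /= -mulmxDl xyE rowform_row.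
have -> : Dx f xi + (P + alpha%:M) = \sum_l lam l *: (A l + P + alpha%:M).
  rewrite DxE [RHS](eq_bigr (fun l => lam l *: A l + lam l *: (P + alpha%:M))).
    by rewrite big_split /= -scaler_suml lam1 scale1r.
  by move=> l _; rewrite -addrA scalerDr.
apply: (proj1 (mxle0P _)); rewrite !mulmxA; apply: mulmx_ge0 => //.
rewrite mulmx_sumr mulmx_suml; under eq_bigr do rewrite -scalemxAr -scalemxAl.
exact: conv_comb_ge0.
Qed.

End ClosedLoop.

Lemma within_ge0_cvg_at_right {R : realType} {V : normedModType R} (d : R -> V) :
  {within [set t | 0 <= t], continuous d} -> d @ 0^'+ --> d 0.
Proof.
move=> dc; have : {within `[0, 1], continuous d}.
  by apply: continuous_subspaceW dc => s /=; rewrite in_itv /= => /andP[].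
by case/(continuous_within_itvP _ ltr01).
Qed.

Section Comparison.
Context {R : realType} {n : nat}.

Lemma cst_solution (g : 'cV[R]_n -> 'cV[R]_n) (e : 'cV[R]_n) :
  solution_on_Rplus (fun _ z => g z - g e) (fun _ => e).
Proof.
split=> [t|t _]; first exact: cvg_cst.
by rewrite subrr; exact: is_derive_cst.
Qed.

Lemma mx_cone_comparison m (H : 'M[R]_(m, n)) (g : 'cV[R]_n -> 'cV[R]_n) (L alpha : R)
    (a b x y : R -> 'cV[R]_n) :
  0 <= L -> (forall u v, `|g u - g v| <= L * `|u - v|) ->
  (forall u v, mx_cone H (u - v) -> mx_cone H (g u - g v + alpha *: (u - v))) ->
  (forall t, 0 < t -> mx_cone H (a t - b t)) ->
  solution_on_Rplus (fun t z => g z + a t) x ->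
  solution_on_Rplus (fun t z => g z + b t) y ->
  mx_cone H (x 0 - y 0) -> forall t, 0 <= t -> mx_cone H (x t - y t).
Proof.
move=> L0 glip gmono ab [xc xd] [yc yd] K0.
apply: (@cone_invariant _ _ _ (@mx_coneD _ _ _ H) (@mx_coneZ _ _ _ H)
  (@mx_cone_closed _ _ _ H) (fun t => x t - y t)
  (fun t v => g (y t + v) + (a t - b t - g (y t))) L alpha L0) => //.
- exact: cvgB (within_ge0_cvg_at_right xc) (within_ge0_cvg_at_right yc).
- move=> t t0; apply: is_derive_eq (is_deriveB (xd t t0) (yd t t0)) _.
  by rewrite [y t + _]addrC subrK; apply/matrixP => i j; rewrite !mxE; ring.
- move=> t u v _; rewrite opprD addrACA subrr addr0.
  by have := glip (y t + u) (y t + v); rewrite opprD addrACA subrr add0r.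
- move=> t v t0 Kv.
  have -> : g (y t + v) + (a t - b t - g (y t)) + alpha *: v =
      (g (y t + v) - g (y t) + alpha *: (y t + v - y t)) + (a t - b t).
    rewrite [y t + v - y t]addrAC subrr add0r.
    by apply/matrixP => i j; rewrite !mxE; ring.
  by apply: mx_coneD (ab t t0); apply: gmono; rewrite addrAC subrr add0r.
Qed.

End Comparison.

Section Forcing.
Context {R : realType} {m n r : nat}.

Lemma mulmx_box_le (M : 'M[R]_(m, r)) (wl wu w : 'cV[R]_r) :
  mxle wl w -> mxle w wu -> mxle (M *m w) (mxpos M *m wu + mxneg M *m wl).
Proof.
move=> lw wu' j l; rewrite (ord1 l) !mxE -big_split /=; apply: ler_sum => k _.
rewrite !mxE; have := lw k 0; have := wu' k 0.
by have [a0|a0] := leP 0 (M j k); nra.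
Qed.

Lemma mulmx_box_ge (M : 'M[R]_(m, r)) (wl wu w : 'cV[R]_r) :
  mxle wl w -> mxle w wu -> mxle (mxpos M *m wl + mxneg M *m wu) (M *m w).
Proof.
move=> lw wu' j l; rewrite (ord1 l) !mxE -big_split /=; apply: ler_sum => k _.
rewrite !mxE; have := lw k 0; have := wu' k 0.
by have [a0|a0] := leP 0 (M j k); nra.
Qed.


Lemma mx_cone_forcing_lower (H : 'M[R]_(m, n)) (C : 'M[R]_(n, r)) (e : 'cV[R]_n)
    (wl wu w : 'cV[R]_r) :
  mxle 0 (H *m e + mxpos (H *m C) *m wl + mxneg (H *m C) *m wu) ->
  mxle wl w -> mxle w wu -> mx_cone H (C *m w - - e).
Proof.
move=> He lw wu' i j; have := He i j; have := mulmx_box_ge (H *m C) lw wu' i j.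
by rewrite opprK mulmxDr mulmxA !mxE; lra.
Qed.

Lemma mx_cone_forcing_upper (H : 'M[R]_(m, n)) (C : 'M[R]_(n, r)) (e : 'cV[R]_n)
    (wl wu w : 'cV[R]_r) :
  mxle (H *m e + mxpos (H *m C) *m wu + mxneg (H *m C) *m wl) 0 ->
  mxle wl w -> mxle w wu -> mx_cone H (- e - C *m w).
Proof.
move=> He lw wu' i j; have := He i j; have := mulmx_box_le (H *m C) lw wu' i j.
by rewrite mulmxBr mulmxN mulmxA !mxE; lra.
Qed.

End Forcing.

Theorem theorem5 (R : realType) (n p r m q k : nat)
  (f : 'cV[R]_n -> 'cV[R]_n) (B : 'M[R]_(n, p)) (C : 'M[R]_(n, r))
  (A : 'I_k -> 'M[R]_n)
  (H : 'M[R]_(m, n)) (hl hu : 'cV[R]_m) (V : 'M[R]_(n, q))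
  (etal etau : 'cV[R]_n) (wl wu : 'cV[R]_r)
  (F : 'M[R]_(p, n)) (alpha : R) :
  C1 f ->
  (forall x, in_conv A (Dx f x)) ->
  \rank H = n ->
  mxle hl hu ->
  (forall x : 'cV[R]_n,
     mxle (0 : 'cV[R]_m) (H *m x) <-> exists y : 'cV[R]_q, mxle 0 y /\ x = V *m y) ->
  H *m etal = hl -> H *m etau = hu ->
  mxle wl wu ->
  (forall i, mxle (0 : 'M[R]_(m, q)) (H *m (A i + B *m F + alpha%:M) *m V)) ->
  mxle (H *m (f etau + B *m F *m etau) + mxpos (H *m C) *m wu + mxneg (H *m C) *m wl)
       (0 : 'cV[R]_m) ->
  mxle (0 : 'cV[R]_m)
       (H *m (f etal + B *m F *m etal) + mxpos (H *m C) *m wl + mxneg (H *m C) *m wu) ->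
  forall (w : R -> 'cV[R]_r),
    (forall t, 0 <= t -> mxle wl (w t) /\ mxle (w t) wu) ->
    forall x : R -> 'cV[R]_n,
      solution_on_Rplus (fun t z => f z + B *m F *m z + C *m w t) x ->
      in_polytope H hl hu (x 0) ->
      forall t, 0 <= t -> in_polytope H hl hu (x t).
Proof.
move=> [df _] Dconv _ _ cone Hl Hu _ HA Hup Hlo w Hw x xsol [x0l x0u] t t0.
pose g z := f z + B *m F *m z.
have L0 : 0 <= \sum_l mxabs_sum (A l) + mxabs_sum (B *m F).
  by rewrite addr_ge0 ?mxabs_sum_ge0 ?sumr_ge0 // => l _; exact: mxabs_sum_ge0.
have glip := lipschitz_add_mulmx (B *m F) (conv_jacobian_lipschitz df Dconv).
have gmono := conv_jacobian_quasimonotone df Dconv cone HA.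
have w_box s : 0 < s -> mxle wl (w s) /\ mxle (w s) wu by move=> /ltW /Hw.
split.
- rewrite -Hl; apply/mx_cone_subP.
  apply: (mx_cone_comparison L0 glip gmono _ xsol (cst_solution g etal)) => //.
    by move=> s /w_box [lw wu']; apply: mx_cone_forcing_lower Hlo lw wu'.
  by apply/mx_cone_subP; rewrite Hl.
- rewrite -Hu; apply/mx_cone_subP.
  apply: (mx_cone_comparison L0 glip gmono _ (cst_solution g etau) xsol) => //.
    by move=> s /w_box [lw wu']; apply: mx_cone_forcing_upper Hup lw wu'.
  by apply/mx_cone_subP; rewrite Hu.
Qed.
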